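(* Let $k \ge 2$ and $2 \le n_1 \le n_2 \le \cdots \le n_k$ be integers, and let $K_{n_1,\dots,n_k}$ be the complete $k$-partite graph with parts of sizes $n_1,\dots,n_k$. (i) If $n_1$ is even, then $\mathrm{sg_e}(K_{n_1,\dots,n_k}) = \sum_{j=2}^k n_j + 1$ if $n_2 \in \{n_1, n_1+1\}$, and $\mathrm{sg_e}(K_{n_1,\dots,n_k}) = \sum_{j=2}^k n_j$ otherwise. (ii) If $n_1$ is odd, then $\mathrm{sg_e}(K_{n_1,\dots,n_k}) = \sum_{j=2}^k n_j + 2$ if $n_2 = n_1$, and $\mathrm{sg_e}(K_{n_1,\dots,n_k}) = \sum_{j=2}^k n_j$ otherwise.
   Context: All graphs are finite, simple and connected. A set $S \subseteq V(G)$ is a strong edge geodetic set of $G$ if one can assign to every unordered pair $\{u,v\}$ of distinct vertices of $S$ either one shortest $u,v$-path $P_{uv}$ in $G$ or no path, in such a way that every edge of $G$ lies on at least one of the assigned paths. The strong edge geodetic number $\mathrm{sg_e}(G)$ is the minimum cardinality of a strong edge geodetic set of $G$. *)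

From mathcomp Require Import all_boot.
Set Implicit Arguments. Unset Strict Implicit. Unset Printing Implicit Defensive.

Section Geodetic.
Variables (T : finType) (e : rel T).

Definition is_walk (u : T) (p : seq T) (v : T) : bool :=
  path e u p && (last u p == v).

Definition shortest_path (u : T) (p : seq T) (v : T) : Prop :=
  is_walk u p v /\ forall q, is_walk u q v -> size p <= size q.

Definition edge_on (u : T) (p : seq T) (x y : T) : bool :=
  has (fun ab : T * T => ((ab.1 == x) && (ab.2 == y)) || ((ab.1 == y) && (ab.2 == x)))
      (zip (u :: p) p).

(* S is a strong edge geodetic set: to each unordered pair {u,v} of distinct
   vertices of S (represented by the ordered pair with enum_rank u < enum_rank v)
   one assigns either one shortest u,v-path or none, such that every edge
   lies on one of the assigned paths. *)
Definition strong_edge_geodetic (S : {set T}) : Prop :=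
  exists P : T -> T -> option (seq T),
    (forall u v p, u \in S -> v \in S -> enum_rank u < enum_rank v ->
        P u v = Some p -> shortest_path u p v) /\
    (forall x y, e x y -> exists u v p,
        [/\ u \in S, v \in S, enum_rank u < enum_rank v, P u v = Some p
          & edge_on u p x y]).

Definition is_sge_number (N : nat) : Prop :=
  (exists S : {set T}, strong_edge_geodetic S /\ #|S| = N) /\
  (forall S : {set T}, strong_edge_geodetic S -> N <= #|S|).

End Geodetic.

(* Complete k-partite graph K_{n 0, ..., n (k-1)}: vertices are pairs
   (part i, index j < n i); two vertices are adjacent iff in different parts. *)
Definition multipartite_vertex (k : nat) (n : nat -> nat) : finType :=
  {i : 'I_k & 'I_(n i)}.

Definition multipartite_rel (k : nat) (n : nat -> nat) : rel (multipartite_vertex k n) :=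
  fun u v => tag u != tag v.

Arguments is_sge_number : clear implicits.
Arguments multipartite_rel : clear implicits.

From mathcomp Require Import all_boot zify.
Set Implicit Arguments. Unset Strict Implicit. Unset Printing Implicit Defensive.

(* Write C for the complement of a strong edge geodetic set S.  Every assigned
   geodesic has length at most 2, so an edge with both ends in C lies on none
   of them: C is contained in a single part.  If x is in C and the part j
   does not meet C, each of the n_j edges from x into part j lies on a path
   u - x - v with u, v in part j, and one such path covers only two of them.
   The pairs of part j with middle vertex x are therefore at least n_j / 2
   in number, pairwise distinct for different x, and so
   |C| * (n_j + odd n_j) <= n_j (n_j - 1), i.e. |C| <= part_capacity n_j.
   Conversely, let C be c vertices of the first part, with c <= n_0 and
   c <= part_capacity n_j for every other part j.  Using c classes of a
   round-robin 1-factorization of each other part, every edge leaving C lies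
   on a path through a pair of S, and all other edges are covered by direct
   paths.  As the part sizes increase, the optimum is
   |C| = min(n_0, part_capacity n_1). *)

Definition part_capacity (m : nat) : nat := (m - odd m).-1.

Lemma part_capacity_mono : {homo part_capacity : m1 m2 / m1 <= m2}.
Proof.
move=> m1 m2; rewrite /part_capacity.
have := odd_double_half m1; have := odd_double_half m2.
by case: (odd m1); case: (odd m2); lia.
Qed.

Lemma part_capacity_lt m : 0 < m -> part_capacity m < m.
Proof. by rewrite /part_capacity; case: (odd m); lia. Qed.

Lemma odd_part_capacity m : 0 < part_capacity m -> odd (part_capacity m).
Proof.
rewrite /part_capacity -[m in m - _]odd_double_half addKn.
by case: m./2 => // h _; rewrite doubleS /= odd_double.
Qed.

Lemma part_capacity_count m c : 0 < m -> c * (m + odd m) <= m * m.-1 ->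
  c <= part_capacity m.
Proof. by rewrite /part_capacity; case: (odd m) => /=; nia. Qed.

Lemma sge_formula a b s : 2 <= a -> a <= b ->
  (if ~~ odd a then (if (b == a) || (b == a.+1) then s + 1 else s)
   else (if b == a then s + 2 else s)) = s + (a - minn a (part_capacity b)).
Proof.
rewrite /part_capacity => ha hab.
by case oa: (odd a); case ob: (odd b); do 2 case: eqP => ?; subst => //=;
  rewrite ?oa in ob; lia.
Qed.

(* Round-robin 1-factorization of K_{q+1} on {0, ..., q} for odd q: class t
   pairs q with t and a with b whenever a + b = 2 t (mod q); q.+1./2 is the
   inverse of 2 modulo q. *)
Definition rr_label (q a b : nat) : nat :=
  if a == q then b else if b == q then a else ((a + b) * q.+1./2) %% q.

Lemma rr_labelC q : commutative (rr_label q).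
Proof.
move=> a b; rewrite /rr_label addnC.
by case: (eqVneq a q) => [->|_] //; case: eqP.
Qed.

Lemma rr_label_double q x : odd q -> (x.*2 * q.+1./2) %% q = x %% q.
Proof.
move=> oq; have half : (q.+1./2).*2 = q.+1.
  by rewrite -[in RHS](odd_double_half q.+1) /= oq.
by rewrite -doubleMl doubleMr half mulnS addnC modnMDl.
Qed.

Lemma rr_label_cover q y t : odd q -> y <= q -> t < q ->
  exists z, [/\ z <= q, z != y & rr_label q y z = t].
Proof.
move=> oq yq tq; rewrite /rr_label.
case: (eqVneq y q) => [->|yNq].
  by exists t; split => //; lia.
case: (eqVneq y t) => [<-|yNt].
  by exists q; rewrite eqxx eq_sym; split.
pose z := (t.*2 + (q - y)) %% q.
have zq : z < q by rewrite ltn_mod; lia.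
have label_z : ((y + z) * q.+1./2) %% q = t.
  rewrite /z -modnMml modnDmr modnMml.
  have -> : y + (t.*2 + (q - y)) = 1 * q + t.*2 by lia.
  by rewrite -modnMml modnMDl modnMml rr_label_double // modn_small.
exists z; split; [lia | | by rewrite (ltn_eqF zq)].
apply: contra_neq yNt => zy.
by rewrite -label_z -zy addnn rr_label_double // modn_small; lia.
Qed.

(* In a part of odd size the last vertex is merged with q, so it is paired
   with b in class b. *)
Definition part_label (m a b : nat) : nat :=
  let q := part_capacity m in rr_label q (minn a q) (minn b q).

Lemma part_labelC m : commutative (part_label m).
Proof. by move=> a b; rewrite /part_label rr_labelC. Qed.

Lemma part_label_cover m y t : y < m -> t < part_capacity m ->
  exists z, [/\ z < m, z != y & part_label m y z = t].
Proof.
move=> ym tq; set q := part_capacity m in tq.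
have qm : q < m by apply: part_capacity_lt; lia.
have [z [zq zy label_z]] :=
  rr_label_cover (odd_part_capacity (leq_ltn_trans (leq0n t) tq)) (geq_minr y q) tq.
exists z; split; first lia.
  by apply: contra_neq zy => zy; lia.
by rewrite /part_label -/q (minn_idPl zq).
Qed.

Lemma leq_double_odd m d : m <= d.*2 -> m + odd m <= d.*2.
Proof.
case odd_m: (odd m); rewrite ?addn0 ?addn1 // ltn_neqAle => ->; rewrite andbT.
by apply: contraTneq odd_m => ->; rewrite odd_double.
Qed.

Lemma homo_leq_bounded (f : nat -> nat) k :
  (forall i, i.+1 < k -> f i <= f i.+1) -> {in gtn k &, {homo f : i j / i <= j}}.
Proof.
move=> fS; apply: homo_leq_in => [|||i _]; [exact: leqnn | exact: leq_trans | | exact: fS].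
by move=> i j _ jk l /andP [_ lj]; rewrite inE; apply: ltn_trans lj jk.
Qed.

Section Counting.
Variable T : finType.

Lemma card_rank_lt_pairs (A : {set T}) :
  (#|[set p in setX A A | enum_rank p.1 < enum_rank p.2]|).*2 = #|A| * #|A|.-1.
Proof.
set L := [set p in _ | _].
pose swap (p : T * T) := (p.2, p.1).
have swapK : involutive swap by case.
have swapL p : (p \in swap @: L) = (swap p \in L) by rewrite (can_imset_pre _ swapK) inE.
have rank_eq (a b : T) : (val (enum_rank a) == val (enum_rank b)) = (a == b).
  by rewrite val_eqE (inj_eq enum_rank_inj).
have diag : setX A A :&: [set p | p.1 == p.2] = (fun x => (x, x)) @: A.
  apply/setP => -[a b]; rewrite !inE /=; apply/idP/imsetP.
    by case/andP=> /andP [aA _] /eqP <-; exists a.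
  by case=> x xA [-> ->]; rewrite xA eqxx.
have offdiag : setX A A :\: [set p | p.1 == p.2] = L :|: swap @: L.
  apply/setP => -[a b]; rewrite !inE swapL !inE /= -rank_eq.
  by case: ltngtP => _ /=; rewrite ?andbT ?andbF ?orbF // andbC.
have disjoint_swap : L :&: swap @: L = set0.
  by apply/setP => -[a b]; rewrite !inE swapL !inE /=; case: ltngtP; rewrite ?andbF.
have := cardsID [set p : T * T | p.1 == p.2] (setX A A).
have diag_inj : injective (fun x : T => (x, x)) by move=> x y [].
rewrite diag offdiag cardsU disjoint_swap cards0 subn0 (card_imset _ (inv_inj swapK)).
rewrite (card_imset _ diag_inj) cardsX -addnn.
by case: #|A| => [|a] //=; nia.
Qed.

Lemma card_le_endpoints (A : {set T}) (E : {set T * T}) :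
  (forall a, a \in A -> exists2 p, p \in E & (p.1 == a) || (p.2 == a)) ->
  #|A| <= (#|E|).*2.
Proof.
move=> cover.
have sub : A \subset fst @: E :|: snd @: E.
  apply/subsetP => a /cover [[x y] pE /orP [] /eqP /= <-]; rewrite inE.
    by apply/orP; left; apply/imsetP; exists (x, y).
  by apply/orP; right; apply/imsetP; exists (x, y).
rewrite -addnn; apply: (leq_trans (subset_leq_card sub)).
apply: (leq_trans (leq_card_setU _ _).1).
by rewrite leq_add // leq_imset_card.
Qed.

Lemma sum_card_fibers (U : finType) (g : T -> U) (D : {set T}) (X : {set U}) :
  \sum_(x in X) #|[set p in D | g p == x]| <= #|D|.
Proof.
rewrite -[#|D|]sum1_card (partition_big g xpredT) //= [leqRHS](bigID (mem X)) /=.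
apply: leq_trans (leq_addr _ _); apply: eq_leq; apply: eq_bigr => x _.
by rewrite -sum1_card; apply: eq_bigl => p; rewrite inE.
Qed.
End Counting.

Section ShortWalks.
Variable T : finType.
Implicit Types u v w x y : T.

Lemma edge_onC u p x y : edge_on u p x y = edge_on u p y x.
Proof. by apply: eq_has => ab /=; rewrite orbC. Qed.

Lemma edge_on_edge x y : edge_on x [:: y] x y.
Proof. by rewrite /edge_on /= !eqxx. Qed.

Lemma edge_on_single_rev u v x y : edge_on u [:: v] x y = edge_on v [:: u] x y.
Proof. by rewrite /edge_on /= !orbF; do !case: (_ == _). Qed.

Lemma edge_on_pair_rev u w v x y : edge_on u [:: w; v] x y = edge_on v [:: w; u] x y.
Proof. by rewrite /edge_on /= !orbF; do !case: (_ == _). Qed.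

Lemma edge_on_single_end u v x y : x != u -> x != v -> ~~ edge_on u [:: v] x y.
Proof.
by rewrite /edge_on /= orbF ![_ == x]eq_sym => /negbTE-> /negbTE->; rewrite andbF.
Qed.

Lemma edge_on_pair_end u w v x y : x != u -> x != v -> edge_on u [:: w; v] x y ->
  w = x /\ ((u == y) || (v == y)).
Proof.
rewrite /edge_on /= orbF ![_ == x]eq_sym => /negbTE-> /negbTE->; rewrite !andbF /= orbF.
by case/orP=> /andP [] => [uy /eqP|/eqP wx vy]; split; rewrite ?uy ?vy ?orbT.
Qed.
End ShortWalks.

Section Multipartite.
Variables (k : nat) (n : nat -> nat).
Local Notation V := (multipartite_vertex k n).
Local Notation E := (multipartite_rel k n).
Implicit Types u v w x y : V.

Definition mvertex (i : 'I_k) (o : 'I_(n i)) : V := Tagged (fun i : 'I_k => 'I_(n i)) o.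

Lemma mvertex_inj (i : 'I_k) : injective (@mvertex i).
Proof. exact: eq_from_Tagged. Qed.

Definition part (i : 'I_k) : {set V} := [set x | tag x == i].

Lemma part_mvertex i : part i = @mvertex i @: setT.
Proof.
apply/setP => x; rewrite inE; apply/eqP/imsetP => [<-|[o _ ->]] //.
by exists (tagged x) => //; case: x.
Qed.

Lemma card_part i : #|part i| = n i.
Proof. by rewrite part_mvertex card_imset ?cardsT ?card_ord //; apply: mvertex_inj. Qed.

Lemma card_multipartite : #|V| = \sum_(i < k) n i.
Proof.
rewrite card_tagged sumnE big_map big_enum /=.
by apply: eq_bigr => i _; rewrite card_ord.
Qed.

Lemma shortest_path_cross u v : tag u != tag v -> shortest_path E u [:: v] v.
Proof.
move=> uv; split; first by rewrite /is_walk /= /multipartite_rel uv eqxx.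
by case=> [|a q] //; rewrite /is_walk /= => /eqP vu; move: uv; rewrite vu eqxx.
Qed.

Lemma shortest_path_via u w v : u != v -> tag u = tag v -> tag w != tag u ->
  shortest_path E u [:: w; v] v.
Proof.
move=> uv tuv wu; split.
  by rewrite /is_walk /= /multipartite_rel eq_sym wu -tuv wu eqxx.
case=> [|a [|b q]] // /andP [] /=; first by move=> _ /eqP vu; move: uv; rewrite vu eqxx.
by rewrite andbT => uv' /eqP av; move: uv'; rewrite av /multipartite_rel tuv eqxx.
Qed.

Lemma shortest_path_shape u w v p : u != v -> tag w != tag u ->
  shortest_path E u p v -> p = [:: v] \/ exists a, p = [:: a; v].
Proof.
move=> uv wu [/andP [_ /eqP lastp] minp].
have short : size p <= 2.
  case: (eqVneq (tag u) (tag v)) => [tuv|tuv].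
    exact: minp _ (proj1 (shortest_path_via uv tuv wu)).
  exact: leq_trans (minp _ (proj1 (shortest_path_cross tuv))) _.
case: p lastp short {minp} => [|a [|b [|c q]]] //= => [vu|->|->]; last by right; exists a.
  by move: uv; rewrite vu eqxx.
by left.
Qed.

Lemma rank_lt_neq u v : enum_rank u < enum_rank v -> u != v.
Proof. by apply: contraTneq => ->; rewrite ltnn. Qed.

Section LowerBound.
Variables (S : {set V}) (P : V -> V -> option (seq V)).
Hypothesis P_shortest : forall u v p, u \in S -> v \in S -> enum_rank u < enum_rank v ->
  P u v = Some p -> shortest_path E u p v.
Hypothesis P_covers : forall x y, E x y -> exists u v p,
  [/\ u \in S, v \in S, enum_rank u < enum_rank v, P u v = Some p & edge_on u p x y].

Lemma compl_edge_cover x y : x \notin S -> E x y ->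
  exists u v, [/\ u \in S, v \in S, enum_rank u < enum_rank v,
    P u v = Some [:: x; v] & tag u = tag v /\ (u == y) || (v == y)].
Proof.
move=> xS xy; have [u [v [p [uS vS uv Puv xy_on]]]] := P_covers xy.
have [_ min_p] := P_shortest uS vS uv Puv.
have xu : x != u by apply: contraNneq xS => ->.
have xv : x != v by apply: contraNneq xS => ->.
have [w wu] : exists w, tag w != tag u.
  case: (eqVneq (tag x) (tag u)) => [xu_tag|]; last by exists x.
  by exists y; rewrite -xu_tag eq_sym.
case: (shortest_path_shape (rank_lt_neq uv) wu (P_shortest uS vS uv Puv)) => [pv|[a pav]].
  by rewrite pv (negbTE (edge_on_single_end y xu xv)) in xy_on.
rewrite pav in xy_on; have [ax yuv] := edge_on_pair_end xu xv xy_on.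
exists u, v; split => //; first by rewrite Puv pav ax.
split => //; apply/eqP; apply: contraT => tuv.
by have := min_p _ (proj1 (shortest_path_cross tuv)); rewrite pav.
Qed.

Lemma compl_in_one_part x x' : x \notin S -> x' \notin S -> tag x = tag x'.
Proof.
move=> xS x'S; apply/eqP; apply: contraT => xx'.
have [u [v [uS vS _ _ [_ /orP [] /eqP eq_x']]]] := compl_edge_cover xS xx'.
  by move: x'S; rewrite -eq_x' uS.
by move: x'S; rewrite -eq_x' vS.
Qed.

Lemma card_compl_le_part_capacity (j : 'I_k) : 0 < n j ->
  (forall x, x \notin S -> tag x != j) -> #|~: S| <= part_capacity (n j).
Proof.
move=> nj_pos off_j.
pose D := [set p in setX (part j) (part j) | enum_rank p.1 < enum_rank p.2].
pose hub (p : V * V) := if P p.1 p.2 is Some (w :: _) then w else p.1.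
have fiber_large x : x \in ~: S -> n j + odd (n j) <= (#|[set p in D | hub p == x]|).*2.
  rewrite inE => xS; apply: leq_double_odd; rewrite -card_part.
  apply: card_le_endpoints => y.
  rewrite inE => /eqP yj.
  have xy : E x y by rewrite /multipartite_rel yj off_j.
  have [u [v [uS vS uv Puv [tuv yuv]]]] := compl_edge_cover xS xy.
  exists (u, v) => //; rewrite !inE /= /hub /= Puv eqxx andbT uv andbT.
  by rewrite -tuv andbb -yj; case/orP: yuv => /eqP <-; rewrite ?tuv.
apply: part_capacity_count => //.
have := card_rank_lt_pairs (part j); rewrite card_part -/D => <-.
rewrite -sum_nat_const.
apply: (@leq_trans (\sum_(x in ~: S) (#|[set p in D | hub p == x]|).*2)).
  exact: leq_sum.
rewrite -(big_morph double doubleD (erefl 0.*2)) leq_double.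
exact: sum_card_fibers.
Qed.
End LowerBound.

Lemma card_compl_le_min (hk : 1 < k) (hn0 : 0 < n 0)
    (hmono : forall i, i.+1 < k -> n i <= n i.+1) (S : {set V}) :
  strong_edge_geodetic E S -> #|~: S| <= minn (n 0) (part_capacity (n 1)).
Proof.
move=> [P [P_shortest P_covers]].
have n_mono := homo_leq_bounded hmono.
have n01 : n 0 <= n 1 by apply: n_mono; rewrite ?inE //; apply: ltnW.
have [->|[x0 x0S]] := set_0Vmem (~: S); first by rewrite cards0.
have off_x0 x : x \notin S -> tag x = tag x0.
  by move=> xS; apply: (compl_in_one_part P_shortest P_covers) => //; rewrite -in_setC.
pose j0 : 'I_k := Ordinal (ltnW hk); pose j1 : 'I_k := Ordinal hk.
have capacity_bound (j : 'I_k) : tag x0 != j -> 0 < n j -> #|~: S| <= part_capacity (n j).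
  move=> x0j nj; apply: card_compl_le_part_capacity P_shortest P_covers _ nj _.
  by move=> x xS; rewrite (off_x0 x xS).
rewrite leq_min; case: (eqVneq (tag x0) j0) => [x0_j0|x0_j0].
  rewrite (capacity_bound j1) ?x0_j0 ?andbT //; last exact: leq_trans hn0 n01.
  rewrite -[n 0]/(n j0) -card_part; apply/subset_leq_card/subsetP => x.
  by rewrite !inE => xS; rewrite (off_x0 x xS) x0_j0.
have cap0 := capacity_bound j0 x0_j0 hn0.
rewrite (leq_trans cap0 (ltnW (part_capacity_lt hn0))).
exact: leq_trans cap0 (part_capacity_mono n01).
Qed.

Section Construction.
Variables (i0 : 'I_k) (c : nat).
Hypotheses (c_part : c <= n i0)
  (c_capacity : forall j, j != i0 -> c <= part_capacity (n j)).

Definition core_vertex (o : 'I_c) : V := mvertex (widen_ord c_part o).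

Definition core : {set V} := [set core_vertex o | o : 'I_c].

Lemma card_core : #|core| = c.
Proof.
rewrite card_imset ?card_ord // => o o' /mvertex_inj /(congr1 val) eq_oo'.
exact: val_inj.
Qed.

Lemma core_tag x : x \in core -> tag x = i0.
Proof. by case/imsetP=> o _ ->. Qed.

(* The middle vertex of the geodesic between two vertices of the same part:
   their round-robin label, read as an index of a core vertex. *)
Definition hub u v : option V :=
  if tag u == i0 then None
  else omap core_vertex (insub (part_label (n (tag u)) (tagged u) (tagged v))).

Definition route u v : option (seq V) :=
  if tag u != tag v then Some [:: v] else omap (fun w => [:: w; v]) (hub u v).

Lemma hubC u v : tag u = tag v -> hub u v = hub v u.
Proof. by case: u v => [i a] [j b] /= eq_ij; subst j; rewrite /hub /= part_labelC. Qed.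

Lemma hub_tag u v w : hub u v = Some w -> tag w != tag u.
Proof.
rewrite /hub; case: eqP => // /eqP ui0.
by case: insub => //= o [<-]; rewrite eq_sym.
Qed.

Lemma route_shortest u v p : u != v -> route u v = Some p -> shortest_path E u p v.
Proof.
rewrite /route => uv; case: ifP => [tuv [<-]|/negbFE/eqP tuv].
  exact: shortest_path_cross.
case hub_uv: hub => [w|] //= [<-].
exact: shortest_path_via uv tuv (hub_tag hub_uv).
Qed.

Lemma hub_cover (o : 'I_c) y : tag y != i0 ->
  exists z, [/\ z != y, tag z = tag y & hub y z = Some (core_vertex o)].
Proof.
case: y => j b /= ji0.
have [|z [zn zb label_z]] := part_label_cover (ltn_ord b) (leq_trans (ltn_ord o) _).
  exact: c_capacity.
exists (mvertex (Ordinal zn)); split => //.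
  by rewrite (inj_eq (@mvertex_inj j)); apply: contra_neq zb => <-.
by rewrite /hub /= (negbTE ji0) label_z valK.
Qed.

Definition route_covers x y : Prop := exists u v p,
  [/\ u \in ~: core, v \in ~: core, enum_rank u < enum_rank v, route u v = Some p
    & edge_on u p x y].

Lemma route_coversC x y : route_covers x y -> route_covers y x.
Proof.
by case=> [u [v [p [uS vS uv Puv xy_on]]]]; exists u, v, p; split; rewrite // edge_onC.
Qed.

Lemma route_rev u v p : route u v = Some p ->
  exists2 p', route v u = Some p' & forall x y, edge_on v p' x y = edge_on u p x y.
Proof.
rewrite /route eq_sym; case: ifP => [_ [<-]|/negbFE/eqP tuv].
  by exists [:: u] => // x y; rewrite edge_on_single_rev.
rewrite -hubC //; case: hub => [w|] //= [<-].
by exists [:: w; u] => // x y; rewrite edge_on_pair_rev.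
Qed.

Lemma route_covers_unordered u v p x y : u \in ~: core -> v \in ~: core -> u != v ->
  route u v = Some p -> edge_on u p x y -> route_covers x y.
Proof.
move=> uS vS uv Puv xy_on.
case: (ltngtP (enum_rank u) (enum_rank v)) => [lt_uv|lt_vu|/val_inj/enum_rank_inj eq_uv].
- by exists u, v, p.
- by have [p' Pvu on_p'] := route_rev Puv; exists v, u, p'; rewrite on_p'.
- by rewrite eq_uv eqxx in uv.
Qed.

Lemma compl_core_sge : strong_edge_geodetic E (~: core).
Proof.
have off_core x : tag x != i0 -> x \in ~: core.
  by move=> xi0; rewrite inE; apply: contra xi0 => /core_tag ->.
have edge_neq x y : E x y -> x != y.
  by apply: contraTneq => ->; rewrite /multipartite_rel eqxx.
have cover_off_core x y : E x y -> x \in ~: core -> y \in ~: core -> route_covers x y.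
  move=> xy xS yS.
  apply: route_covers_unordered xS yS (edge_neq _ _ xy) _ (edge_on_edge x y).
  by rewrite /route (ifT _ _ xy).
have cover_from_core x y : E x y -> x \in core -> route_covers x y.
  move=> xy /[dup] /core_tag xi0 /imsetP [o _ ->].
  have yi0 : tag y != i0 by rewrite -xi0 eq_sym.
  have [z [zy tzy hub_yz]] := hub_cover o yi0.
  have route_yz : route y z = Some [:: core_vertex o; z].
    by rewrite /route tzy ifN ?negbK //= hub_yz.
  have zS : z \in ~: core by apply: off_core; rewrite tzy.
  apply: (route_covers_unordered (off_core _ yi0) zS _ route_yz); first by rewrite eq_sym.
  by rewrite /edge_on /= !eqxx orbT.
exists route; split => [u v p _ _ /rank_lt_neq|x y xy]; first exact: route_shortest.
case: (boolP (x \in core)) => [xC|xS]; first exact: cover_from_core.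
case: (boolP (y \in core)) => [yC|yS]; last by apply: cover_off_core; rewrite ?inE.
by apply/route_coversC/cover_from_core; rewrite // /multipartite_rel eq_sym.
Qed.
End Construction.
End Multipartite.

Theorem mainTheorem7 (k : nat) (n : nat -> nat)
  (hk : 2 <= k) (hn0 : 2 <= n 0)
  (hmono : forall i, i.+1 < k -> n i <= n i.+1) :
  is_sge_number (multipartite_vertex k n) (multipartite_rel k n)
    (if ~~ odd (n 0) then
       (if (n 1 == n 0) || (n 1 == (n 0).+1)
        then \sum_(1 <= j < k) n j + 1 else \sum_(1 <= j < k) n j)
     else
       (if n 1 == n 0 then \sum_(1 <= j < k) n j + 2 else \sum_(1 <= j < k) n j)).
Proof.
rewrite (sge_formula _ hn0 (hmono 0 hk)).
set c := minn (n 0) (part_capacity (n 1)).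
have card_V : #|multipartite_vertex k n| = n 0 + \sum_(1 <= j < k) n j.
  by rewrite card_multipartite -(big_mkord xpredT) big_ltn //; apply: ltnW.
have c_le : c <= n 0 := geq_minl _ _.
split.
  pose i0 : 'I_k := Ordinal (ltnW hk).
  have c_part : c <= n i0 := c_le.
  have c_capacity j : j != i0 -> c <= part_capacity (n j).
    move=> ji0; apply: leq_trans (geq_minr _ _) (part_capacity_mono _).
    apply: (homo_leq_bounded hmono) => //; first exact: ltn_ord.
    by rewrite lt0n; apply: contraNneq ji0 => j0; apply/eqP/val_inj.
  exists (~: core c_part); split; first exact: compl_core_sge c_capacity.
  by rewrite cardsCs setCK card_core card_V; lia.
move=> S /(card_compl_le_min hk (ltnW hn0) hmono) le_c.
by rewrite [#|S|]cardsCs card_V; lia.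
Qed.
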